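(* Every strictly positive formula $A$ is $\mathbf{RJ}$-equivalent (i.e. $A\vdash_{\mathbf{RJ}}A'$ and $A'\vdash_{\mathbf{RJ}}A$) to an ordered formula $A'$.
   Context: Strictly positive formulas: $A::= p\mid \top\mid (A\land B)\mid \alpha A$, $\alpha\le\omega$. $\mathbf{RJ}$: $A\vdash A$; $A\vdash\top$; cut; $A\land B\vdash A$; $A\land B\vdash B$; from $A\vdash B$, $A\vdash C$ infer $A\vdash B\land C$; from $A\vdash B$ infer $\alpha A\vdash\alpha B$; $\alpha\alpha A\vdash\alpha A$; $\alpha\beta A\vdash\beta A$, $\beta\alpha A\vdash\beta A$ for $\alpha\ge\beta$; $\alpha A\land\beta B\vdash\alpha(A\land\beta B)$ for $\alpha>\beta$. ${\mathcal L}_{\ge m}$ is the set of strictly positive formulas all of whose modalities lie in $[m,\omega]$. A fact is $\top$ or a conjunction of variables. Ordered formulas are defined inductively: $A$ is ordered if $A=F\land\bigwedge_{i<k}m_iA_i$ for some $k\ge0$ (with $A=F$ if $k=0$), where $F$ is a fact, each $A_i\in{\mathcal L}_{\ge m_i}$ is ordered, and $m_0\ge m_1\ge\dots\ge m_{k-1}$. *)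

From Stdlib Require Import List Arith.
Import ListNotations.

(* Modalities: ordinals alpha <= omega, i.e. natural numbers together with omega. *)
Inductive md : Type := Fin (n : nat) | Om.

Definition md_le (a b : md) : Prop :=
  match a, b with
  | Fin n, Fin m => n <= m
  | _, Om => True
  | Om, Fin _ => False
  end.

Definition md_lt (a b : md) : Prop := md_le a b /\ a <> b.

Inductive fm : Type :=
| Var (p : nat)
| Top
| And (A B : fm)
| Dia (a : md) (A : fm).

Inductive RJ : fm -> fm -> Prop :=
| rj_refl A : RJ A A
| rj_top A : RJ A Top
| rj_cut A B C : RJ A B -> RJ B C -> RJ A C
| rj_andl A B : RJ (And A B) A
| rj_andr A B : RJ (And A B) B
| rj_andI A B C : RJ A B -> RJ A C -> RJ A (And B C)
| rj_mono a A B : RJ A B -> RJ (Dia a A) (Dia a B)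
| rj_trans a A : RJ (Dia a (Dia a A)) (Dia a A)
| rj_mon1 a b A : md_le b a -> RJ (Dia a (Dia b A)) (Dia b A)
| rj_mon2 a b A : md_le b a -> RJ (Dia b (Dia a A)) (Dia b A)
| rj_J a b A B : md_lt b a -> RJ (And (Dia a A) (Dia b B)) (Dia a (And A (Dia b B))).

Definition rj_equiv (A B : fm) : Prop := RJ A B /\ RJ B A.

(* A lies in L_{>= m}: all modalities of A lie in [m, omega]. *)
Fixpoint in_L_ge (m : md) (A : fm) : Prop :=
  match A with
  | Var _ => True
  | Top => True
  | And B C => in_L_ge m B /\ in_L_ge m C
  | Dia a B => md_le m a /\ in_L_ge m B
  end.

(* Conjunction of variables (with arbitrary bracketing, at least one variable). *)
Fixpoint var_conj (A : fm) : Prop :=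
  match A with
  | Var _ => True
  | And B C => var_conj B /\ var_conj C
  | _ => False
  end.

Definition is_fact (F : fm) : Prop := F = Top \/ var_conj F.

(* m_0 A_0 /\ (m_1 A_1 /\ (... /\ m_{k-1} A_{k-1})), for k >= 1 *)
Fixpoint big_dia (d : md * fm) (l : list (md * fm)) : fm :=
  match l with
  | [] => Dia (fst d) (snd d)
  | d' :: l' => And (Dia (fst d) (snd d)) (big_dia d' l')
  end.

(* F /\ /\_{i<k} m_i A_i, which is F when k = 0 *)
Definition build (F : fm) (l : list (md * fm)) : fm :=
  match l with
  | [] => F
  | d :: l' => And F (big_dia d l')
  end.

Fixpoint nonincr (l : list md) : Prop :=
  match l with
  | a :: ((b :: _) as l') => md_le b a /\ nonincr l'
  | _ => True
  end.

Inductive ordered : fm -> Prop :=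
| ordered_mk (F : fm) (l : list (md * fm)) :
    is_fact F ->
    (forall d, In d l -> ordered (snd d) /\ in_L_ge (fst d) (snd d)) ->
    nonincr (map fst l) ->
    ordered (build F l).

From Stdlib Require Import List Arith Lia Sorted Permutation Mergesort.
Import ListNotations.

(** Every formula is shown to be RJ-equivalent to a normal form [nf F l]: a
    fact [F] conjoined with a list [l] of diamond components [m_i A_i], each
    [A_i] ordered and in [L_{>= m_i}].  Sorting the components by nonincreasing
    modality then turns a normal form into an ordered formula [build F (sort l)].

    Conjunction-only rearrangements are all handled by one principle: if every
    conjunct of [B] (the list [flat B] of its non-[And], non-[Top] leaves) is a
    conjunct of [A], then [A |- B].  The normal form is computed by recursion on
    the formula: conjunctions merge facts and concatenate component lists; for
    [a A] with [A ~ nf F l] we split [l] into the components of modality [>= a]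
    ([hi]) and [< a] ([lo]) and use the absorption law
    [a (X /\ lo) ~ a X /\ lo] (rules [mon1] and [J]) to obtain the normal form
    with the single new component [a (build F (sort hi))] followed by [lo]. *)

Definition md_leb (a b : md) : bool :=
  match a, b with
  | Fin n, Fin m => Nat.leb n m
  | _, Om => true
  | Om, Fin _ => false
  end.

Lemma md_leb_spec a b : md_leb a b = true <-> md_le a b.
Proof. destruct a, b; simpl; rewrite ?Nat.leb_le; intuition discriminate. Qed.

Lemma md_le_trans a b c : md_le a b -> md_le b c -> md_le a c.
Proof. destruct a, b, c; simpl; intuition lia. Qed.

Lemma md_le_total a b : md_le a b \/ md_le b a.
Proof. destruct a, b; simpl; auto; lia. Qed.

Lemma md_leb_false a b : md_leb a b = false -> md_lt b a.
Proof.
  intros Hab. split.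
  - destruct (md_le_total a b) as [H | H]; [apply md_leb_spec in H; congruence | exact H].
  - intros ->. destruct a; simpl in Hab; [rewrite Nat.leb_refl in Hab|]; discriminate.
Qed.

Lemma rj_equiv_refl A : rj_equiv A A.
Proof. split; apply rj_refl. Qed.

Lemma rj_equiv_sym A B : rj_equiv A B -> rj_equiv B A.
Proof. intros [H1 H2]. split; assumption. Qed.

Lemma rj_equiv_trans A B C : rj_equiv A B -> rj_equiv B C -> rj_equiv A C.
Proof. intros [H1 H2] [H3 H4]. split; eapply rj_cut; eauto. Qed.

Lemma rj_equiv_and A A' B B' :
  rj_equiv A A' -> rj_equiv B B' -> rj_equiv (And A B) (And A' B').
Proof.
  intros [H1 H2] [H3 H4].
  split; apply rj_andI; eauto using rj_cut, rj_andl, rj_andr.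
Qed.

Lemma rj_equiv_dia a A B : rj_equiv A B -> rj_equiv (Dia a A) (Dia a B).
Proof. intros [H1 H2]. split; apply rj_mono; assumption. Qed.

Fixpoint bigand (L : list fm) : fm :=
  match L with [] => Top | A :: L' => And A (bigand L') end.

Fixpoint flat (A : fm) : list fm :=
  match A with
  | And B C => flat B ++ flat C
  | Top => []
  | _ => [A]
  end.

Lemma bigand_elim L A : In A L -> RJ (bigand L) A.
Proof.
  induction L as [|B L IH]; simpl; intros HA; [contradiction|].
  destruct HA as [<- | HA]; [apply rj_andl|].
  apply rj_cut with (bigand L); [apply rj_andr | auto].
Qed.

Lemma bigand_intro A L : (forall B, In B L -> RJ A B) -> RJ A (bigand L).
Proof. induction L; simpl; intros H; [apply rj_top | apply rj_andI; auto]. Qed.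

Lemma bigand_app L1 L2 :
  rj_equiv (bigand (L1 ++ L2)) (And (bigand L1) (bigand L2)).
Proof.
  split.
  - apply rj_andI; apply bigand_intro; intros B HB; apply bigand_elim, in_or_app; auto.
  - apply bigand_intro. intros B HB. apply in_app_or in HB as [HB | HB].
    + apply rj_cut with (bigand L1); [apply rj_andl | apply bigand_elim; auto].
    + apply rj_cut with (bigand L2); [apply rj_andr | apply bigand_elim; auto].
Qed.

Lemma flat_equiv A : rj_equiv A (bigand (flat A)).
Proof.
  induction A as [p | | A IHA B IHB | a A _]; simpl.
  1, 4: split; [apply rj_andI; [apply rj_refl | apply rj_top] | apply rj_andl].
  - split; apply rj_top.
  - eapply rj_equiv_trans; [apply rj_equiv_and; eassumption|].
    apply rj_equiv_sym, bigand_app.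
Qed.

Lemma rj_conjuncts A B : incl (flat B) (flat A) -> RJ A B.
Proof.
  intros Hincl.
  apply rj_cut with (bigand (flat A)); [apply flat_equiv|].
  apply rj_cut with (bigand (flat B)); [|apply flat_equiv].
  apply bigand_intro. intros C HC. apply bigand_elim, Hincl, HC.
Qed.

Lemma rj_equiv_conjuncts A B :
  incl (flat A) (flat B) -> incl (flat B) (flat A) -> rj_equiv A B.
Proof. split; apply rj_conjuncts; assumption. Qed.

Definition dia (d : md * fm) : fm := Dia (fst d) (snd d).

Definition nf (F : fm) (l : list (md * fm)) : fm := And F (bigand (map dia l)).

Lemma flat_dias l : flat (bigand (map dia l)) = map dia l.
Proof. induction l as [|d l IH]; simpl; [reflexivity | rewrite IH; reflexivity]. Qed.

Lemma flat_nf F l : flat (nf F l) = flat F ++ map dia l.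
Proof. unfold nf; simpl. rewrite flat_dias. reflexivity. Qed.

Lemma flat_build F l : flat (build F l) = flat F ++ map dia l.
Proof.
  destruct l as [|d l]; simpl; [rewrite app_nil_r; reflexivity|].
  f_equal. revert d; induction l as [|e l IH]; intros d; simpl; [reflexivity|].
  rewrite IH. reflexivity.
Qed.

(* Closes a goal [incl (flat A) (flat B)] between conjunctions of normal-form
   pieces by propositional reasoning on list membership. *)
Ltac conjuncts :=
  repeat progress (cbn [flat]; rewrite ?flat_nf, ?flat_dias, ?flat_build);
  let C := fresh in let HC := fresh in
  intros C HC; cbn [dia fst snd] in *; rewrite ?in_app_iff in *; simpl in *; tauto.

(* Absorption: components of modality below [a] can be moved in and out of
   [a]; outwards by [mon1], inwards by [J]. *)
Lemma dia_absorb a X l :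
  (forall d, In d l -> md_lt (fst d) a) ->
  rj_equiv (Dia a (And X (bigand (map dia l)))) (And (Dia a X) (bigand (map dia l))).
Proof.
  intros Hlt. split.
  - apply rj_andI; [apply rj_mono, rj_andl|].
    apply bigand_intro. intros B HB. apply in_map_iff in HB as [d [<- Hd]].
    apply rj_cut with (Dia a (dia d)).
    + apply rj_mono. apply rj_cut with (bigand (map dia l)); [apply rj_andr|].
      apply bigand_elim, in_map, Hd.
    + apply rj_mon1, Hlt, Hd.
  - induction l as [|d l IH]; simpl.
    + apply rj_cut with (Dia a X); [apply rj_andl|].
      apply rj_mono, rj_andI; [apply rj_refl | apply rj_top].
    + apply rj_cut with (And (Dia a (And X (bigand (map dia l)))) (Dia (fst d) (snd d))).
      * apply rj_andI; [|apply rj_conjuncts; conjuncts].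
        apply rj_cut with (And (Dia a X) (bigand (map dia l))); [apply rj_conjuncts; conjuncts|].
        apply IH. intros e He. apply Hlt. right. exact He.
      * apply rj_cut with (Dia a (And (And X (bigand (map dia l))) (Dia (fst d) (snd d)))).
        -- apply rj_J, Hlt. left. reflexivity.
        -- apply rj_mono, rj_conjuncts. conjuncts.
Qed.

Module ComponentOrder <: Orders.TotalLeBool.
  Definition t := (md * fm)%type.
  (* [d <=? e] when [e] may follow [d] in a nonincreasing list. *)
  Definition leb (d e : t) : bool := md_leb (fst e) (fst d).
  Infix "<=?" := leb (at level 70, no associativity).
  Theorem leb_total : forall d e, (d <=? e) = true \/ (e <=? d) = true.
  Proof. intros d e. unfold leb. rewrite !md_leb_spec. apply md_le_total. Qed.
End ComponentOrder.

Module Import ComponentSort := Sort ComponentOrder.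

Lemma nonincr_sorted l :
  Sorted (fun d e => ComponentOrder.leb d e = true) l -> nonincr (map fst l).
Proof.
  induction 1 as [|d l Hl IH Hhd]; simpl; [exact I|].
  destruct l as [|e l]; simpl in *; [exact I|].
  split; [|exact IH]. inversion Hhd. apply md_leb_spec. assumption.
Qed.

Lemma nonincr_sort l : nonincr (map fst (sort l)).
Proof. apply nonincr_sorted, Sorted_sort. Qed.

Lemma in_sort l d : In d (sort l) <-> In d l.
Proof. split; apply Permutation_in; [symmetry|]; apply Permuted_sort. Qed.

Lemma build_sort_equiv F l : rj_equiv (build F (sort l)) (nf F l).
Proof.
  pose proof (Permutation_map dia (Permuted_sort l)) as Hperm.
  apply rj_equiv_conjuncts; rewrite flat_build, flat_nf;
    apply incl_app; auto using incl_appl, incl_refl; apply incl_appr;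
    intros C; apply Permutation_in; [symmetry|]; exact Hperm.
Qed.

Definition components_ok (l : list (md * fm)) : Prop :=
  forall d, In d l -> ordered (snd d) /\ in_L_ge (fst d) (snd d).

Lemma in_L_ge_mono a b A : md_le a b -> in_L_ge b A -> in_L_ge a A.
Proof. induction A; simpl; intuition eauto using md_le_trans. Qed.

Lemma in_L_ge_conjuncts a A : (forall C, In C (flat A) -> in_L_ge a C) -> in_L_ge a A.
Proof.
  induction A as [p | | A IHA B IHB | m A _]; simpl; intros H; try exact I.
  - split; [apply IHA | apply IHB]; intros C HC; apply H, in_or_app; auto.
  - apply (H (Dia m A)). left. reflexivity.
Qed.

Lemma fact_conjuncts a F C : is_fact F -> In C (flat F) -> in_L_ge a C.
Proof.
  intros [-> | HF]; simpl; [contradiction|]. revert HF.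
  induction F; simpl; intros HF HC; try contradiction.
  - destruct HC as [<- | []]; exact I.
  - apply in_app_or in HC as [HC | HC]; intuition.
Qed.

Lemma in_L_ge_build a F l :
  is_fact F -> (forall d, In d l -> md_le a (fst d) /\ in_L_ge (fst d) (snd d)) ->
  in_L_ge a (build F l).
Proof.
  intros HF Hl. apply in_L_ge_conjuncts. rewrite flat_build. intros C HC.
  apply in_app_or in HC as [HC | HC]; [apply fact_conjuncts with F; assumption|].
  apply in_map_iff in HC as [d [<- Hd]]. destruct (Hl d Hd) as [Hle HL].
  simpl. split; [exact Hle | apply in_L_ge_mono with (fst d); assumption].
Qed.

Lemma ordered_build_sort F l : is_fact F -> components_ok l -> ordered (build F (sort l)).
Proof.
  intros HF Hl. apply ordered_mk; [exact HF | | apply nonincr_sort].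
  intros d Hd. apply Hl, in_sort, Hd.
Qed.

(* Conjunction of facts, avoiding spurious [Top] conjuncts. *)
Definition fact_and (F G : fm) : fm :=
  match F, G with
  | Top, _ => G
  | _, Top => F
  | _, _ => And F G
  end.

Lemma fact_and_is_fact F G : is_fact F -> is_fact G -> is_fact (fact_and F G).
Proof.
  unfold is_fact. intros HF HG.
  destruct F, G; simpl in *; intuition discriminate.
Qed.

Lemma flat_fact_and F G : flat (fact_and F G) = flat F ++ flat G.
Proof. destruct F, G; simpl; rewrite ?app_nil_r; reflexivity. Qed.

Lemma nf_and F1 l1 F2 l2 :
  rj_equiv (And (nf F1 l1) (nf F2 l2)) (nf (fact_and F1 F2) (l1 ++ l2)).
Proof.
  apply rj_equiv_conjuncts; cbn [flat]; rewrite !flat_nf, flat_fact_and, map_app; conjuncts.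
Qed.

Definition hi (a : md) (l : list (md * fm)) := filter (fun d => md_leb a (fst d)) l.
Definition lo (a : md) (l : list (md * fm)) := filter (fun d => negb (md_leb a (fst d))) l.

Lemma in_hi a l d : In d (hi a l) <-> In d l /\ md_le a (fst d).
Proof. unfold hi. rewrite filter_In, md_leb_spec. reflexivity. Qed.

Lemma in_lo a l d : In d (lo a l) -> In d l /\ md_lt (fst d) a.
Proof.
  unfold lo. rewrite filter_In, Bool.negb_true_iff.
  intros [Hd Hlt]. split; [exact Hd | apply md_leb_false, Hlt].
Qed.

Lemma in_hi_lo a l d : In d l -> In d (hi a l) \/ In d (lo a l).
Proof.
  unfold hi, lo. rewrite !filter_In. destruct (md_leb a (fst d)); auto.
Qed.

Lemma nf_split a F l :
  rj_equiv (nf F l) (And (nf F (hi a l)) (bigand (map dia (lo a l)))).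
Proof.
  apply rj_equiv_conjuncts; cbn [flat]; rewrite !flat_nf, flat_dias;
    intros C; rewrite !in_app_iff, !in_map_iff.
  - intros [HC | [d [<- Hd]]]; [auto|].
    destruct (in_hi_lo a l d Hd); eauto 6.
  - intros [[HC | [d [<- Hd]]] | [d [<- Hd]]]; [auto | |];
      right; exists d; split; auto; [apply (in_hi a l d), Hd | apply (in_lo a l d), Hd].
Qed.

(* The normal form of [a (F /\ l)]: the components of modality at least [a]
   go inside the new component, the others stay outside. *)
Definition dia_nf (a : md) (F : fm) (l : list (md * fm)) : list (md * fm) :=
  (a, build F (sort (hi a l))) :: lo a l.

(* [a (nf F l)] is equivalent to [nf Top (dia_nf a F l)]: split off [lo], move it
   out by absorption, and sort the components inside. *)
Lemma nf_dia a F l : rj_equiv (Dia a (nf F l)) (nf Top (dia_nf a F l)).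
Proof.
  eapply rj_equiv_trans; [apply rj_equiv_dia, (nf_split a)|].
  eapply rj_equiv_trans; [apply dia_absorb; intros d Hd; apply (in_lo a l d), Hd|].
  eapply rj_equiv_trans.
  { apply rj_equiv_and; [|apply rj_equiv_refl].
    apply rj_equiv_dia, rj_equiv_sym, build_sort_equiv. }
  apply rj_equiv_conjuncts; unfold dia_nf; conjuncts.
Qed.

(* The new component is ordered and in [L_{>= a}], since every component of
   [hi a l] has modality at least [a]. *)
Lemma components_ok_dia a F l :
  is_fact F -> components_ok l -> components_ok (dia_nf a F l).
Proof.
  intros HF Hl d [<- | Hd]; simpl.
  - split; [apply ordered_build_sort; [exact HF|]|].
    + intros d Hd. apply Hl, (in_hi a l d), Hd.
    + apply in_L_ge_build; [exact HF|]. intros d Hd.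
      apply in_sort, in_hi in Hd as [Hd Hle]. split; [exact Hle | apply Hl, Hd].
  - apply Hl, (in_lo a l d), Hd.
Qed.

Lemma normal_form A :
  exists F l, is_fact F /\ components_ok l /\ rj_equiv A (nf F l).
Proof.
  induction A as [p | | A1 [F1 [l1 [HF1 [Hl1 HA1]]]] A2 [F2 [l2 [HF2 [Hl2 HA2]]]]
                | a A [F [l [HF [Hl HA]]]]].
  - exists (Var p), []. split; [right; exact I|]. split; [intros d []|].
    apply rj_equiv_conjuncts; conjuncts.
  - exists Top, []. split; [left; reflexivity|]. split; [intros d []|].
    apply rj_equiv_conjuncts; conjuncts.
  - exists (fact_and F1 F2), (l1 ++ l2).
    split; [apply fact_and_is_fact; assumption|].
    split; [intros d Hd; apply in_app_or in Hd as [Hd | Hd]; auto|].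
    eapply rj_equiv_trans; [apply rj_equiv_and; eassumption | apply nf_and].
  - exists Top, (dia_nf a F l).
    split; [left; reflexivity|]. split; [apply components_ok_dia; assumption|].
    eapply rj_equiv_trans; [apply rj_equiv_dia; eassumption | apply nf_dia].
Qed.

Theorem lemma5p3 : forall A : fm, exists A' : fm, ordered A' /\ RJ A A' /\ RJ A' A.
Proof.
  intros A. destruct (normal_form A) as [F [l [HF [Hl HA]]]].
  exists (build F (sort l)). split; [apply ordered_build_sort; assumption|].
  apply rj_equiv_trans with (C := build F (sort l)) in HA;
    [exact HA | apply rj_equiv_sym, build_sort_equiv].
Qed.
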